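(* Let $A$ and $B$ be strings with LZ77 parses $Z_A$ and $Z_B$, viewed as strings of tuples. Suppose Alice knows $A$, Bob knows $B$, and the length $\mathrm{LCP}(Z_A,Z_B)$ of the longest common prefix of $Z_A$ and $Z_B$ is known. Then the parties can determine $\ell=\mathrm{LCP}(A,B)$ using $O(1)$ rounds and $O(\lg\ell)$ communication.
   Context: $\mathrm{LCP}(X,Y)$ is the length of the longest common prefix of $X$ and $Y$. The LZ77 parse (without self-references) of a string $S$ divides $S$ greedily from left to right into phrases. The $i$-th phrase, starting at $u_i$, is the longest substring with an earlier occurrence (its source) starting left of $u_i$ and not overlapping the phrase, followed by the next symbol. It is represented as the tuple $(s_i,l_i,\alpha_i)$: source start, source length, and next symbol. A parse is a string over the alphabet of such tuples. Both parties use the same deterministic parsing rule (e.g. leftmost source), so equal strings get equal parses. *)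

From mathcomp Require Import all_boot.
Set Implicit Arguments. Unset Strict Implicit. Unset Printing Implicit Defensive.

Fixpoint lcp (T : eqType) (x y : seq T) : nat :=
  match x, y with
  | a :: x', b :: y' => if a == b then (lcp x' y').+1 else 0
  | _, _ => 0
  end.

Section LZ.
Variable T : eqType.
Implicit Types (S : seq T).

Definition occ S (s u L : nat) : bool :=
  take L (drop s S) == take L (drop u S).

Definition is_source S (u L s : nat) : bool := (s + L <= u) && occ S s u L.

(* length of the longest substring at u having an earlier non-overlapping
   occurrence and still followed by a next symbol (u + L < size S) *)
Definition phrase_len S (u : nat) : nat :=
  \max_(L < size S - u | [exists s : 'I_u.+1, is_source S u L s]) (L : nat).

(* leftmost source (0 when the length is 0) *)
Definition phrase_src S (u : nat) : nat :=
  find (is_source S u (phrase_len S u)) (iota 0 u.+1).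

Fixpoint lz_from (fuel u : nat) S : seq (nat * nat * T) :=
  match fuel with
  | 0 => [::]
  | f.+1 =>
    match drop (u + phrase_len S u) S with
    | a :: _ => (phrase_src S u, phrase_len S u, a)
                  :: lz_from f (u + phrase_len S u).+1 S
    | [::] => [::]
    end
  end.

(* the LZ77 parse of S as a string of tuples (source start, length, symbol) *)
Definition lz77 S : seq (nat * nat * T) := lz_from (size S) 0 S.
End LZ.

(* Round i (i = 0, 1, ...) is spoken by Alice if i is even, by Bob if odd;
   each message depends only on the speaker's input and the transcript. *)
Record protocol (IA IB O : Type) := Protocol {
  rounds : nat;
  msg_A : IA -> seq (seq bool) -> seq bool;
  msg_B : IB -> seq (seq bool) -> seq bool;
  out_A : IA -> seq (seq bool) -> O;
  out_B : IB -> seq (seq bool) -> O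
}.

Definition step (IA IB O : Type) (P : protocol IA IB O) (a : IA) (b : IB)
    (tr : seq (seq bool)) (i : nat) : seq (seq bool) :=
  rcons tr (if odd i then msg_B P b tr else msg_A P a tr).

Definition transcript (IA IB O : Type) (P : protocol IA IB O) (a : IA) (b : IB)
  : seq (seq bool) := foldl (step P a b) [::] (iota 0 (rounds P)).

Definition comm_cost (tr : seq (seq bool)) : nat := sumn (map size tr).

(* Let k = LCP(Z_A, Z_B). The first k phrases of A and B coincide, so A and B
   agree up to the common start p of phrase k + 1.  Past p the strings agree for
   at most max(L_A, L_B) symbols, L_A and L_B being the lengths of phrase k + 1:
   a longer agreement would give these phrases the same length, leftmost source
   and next symbol, contradicting the choice of k.  The parties exchange the
   lengths L and sources s of their phrases.  As s + L <= p, Bob's phrase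
   B[p, p + L_B) equals B[s_B, s_B + L_B) = A[s_B, s_B + L_B), which Alice can
   read, so she computes min(m, L_B) with m = LCP(A[p..], B[p..]); Bob likewise
   computes min(m, L_A), and the maximum of the two is m.  Every number sent is
   at most p + m = LCP(A, B), hence costs O(lg LCP(A, B)) bits. *)

From mathcomp Require Import all_boot zify.
Set Implicit Arguments. Unset Strict Implicit. Unset Printing Implicit Defensive.

Section Lcp.
Variable T : eqType.
Implicit Types x y : seq T.

Lemma lcp_leq_size x y : lcp x y <= size x.
Proof. by elim: x y => [|a x IH] [|b y] //=; case: (a == b); rewrite ?ltnS. Qed.

Lemma lcpC x y : lcp x y = lcp y x.
Proof. by elim: x y => [|a x IH] [|b y] //=; rewrite eq_sym IH. Qed.

Lemma take_lcp x y : take (lcp x y) x = take (lcp x y) y.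
Proof. by elim: x y => [|a x IH] [|b y] //=; case: eqP => [<-|] //=; rewrite IH. Qed.

Lemma lcp_drop_lcp x y : lcp (drop (lcp x y) x) (drop (lcp x y) y) = 0.
Proof.
elim: x y => [|a x IH] [|b y] //=.
by case: eqP => [<-|/eqP ne] //=; rewrite (negbTE ne).
Qed.

Lemma lcp_take x y n : lcp x (take n y) = minn (lcp x y) n.
Proof.
by elim: x y n => [|a x IH] [|b y] [|n] //=; case: (a == b); rewrite ?IH ?minnSS.
Qed.

Lemma lcp_common_prefix x y p : take p x = take p y -> p <= size x ->
  lcp x y = p + lcp (drop p x) (drop p y).
Proof.
by elim: p x y => [|p IH] [|a x] [|b y] //= [-> /IH H] /H ->; rewrite eqxx.
Qed.

Lemma eq_take_drop x y u s L : s + L <= u -> take u x = take u y ->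
  take L (drop s x) = take L (drop s y).
Proof.
move=> sLu Exy; have trunc z : take L (drop s z) = take L (drop s (take u z)).
  by rewrite !take_drop take_takel // addnC.
by rewrite trunc Exy -trunc.
Qed.

Lemma takeDS x u L :
  take (u + L).+1 x = take u x ++ take L (drop u x) ++ take 1 (drop (u + L) x).
Proof. by rewrite -addnS takeD -addn1 takeD drop_drop addnC. Qed.
End Lcp.

Section Phrase.
Variable T : eqType.
Implicit Types S : seq T.

Lemma is_source_phrase S u : is_source S u (phrase_len S u) (phrase_src S u).
Proof.
have : [exists s : 'I_u.+1, is_source S u (phrase_len S u) s].
  apply: (big_ind (fun L => [exists s : 'I_u.+1, is_source S u L s])) => //.
  - by apply/existsP; exists ord0; rewrite /is_source /occ !take0 eqxx.
  - by move=> L L'; rewrite /maxn; case: ltnP.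
case/existsP=> s src_s.
have has_src : has (is_source S u (phrase_len S u)) (iota 0 u.+1).
  by apply/hasP; exists (val s); rewrite // mem_iota ltn_ord.
have := nth_find 0 has_src; rewrite nth_iota //.
by move: has_src; rewrite has_find size_iota.
Qed.

Lemma phrase_src_len_leq S u : phrase_src S u + phrase_len S u <= u.
Proof. by case/andP: (is_source_phrase S u). Qed.

Lemma leq_phrase_len S u L s :
  L < size S - u -> s <= u -> is_source S u L s -> L <= phrase_len S u.
Proof.
move=> ltL le_su src_s.
apply: (@leq_bigmax_cond _ _ (fun i : 'I_(size S - u) => (i : nat)) (Ordinal ltL)).
by apply/existsP; exists (Ordinal (le_su : s < u.+1)).
Qed.

Lemma phrase_len_lt_size S u : u < size S -> u + phrase_len S u < size S.
Proof.
move=> lt_u; apply: (big_ind (fun L => u + L < size S)) => [|L L'|L _]; try lia.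
by have := ltn_ord L; lia.
Qed.

Lemma is_source_leq S u L L' s :
  L' <= L -> is_source S u L s -> is_source S u L' s.
Proof.
rewrite /is_source /occ => le_L /andP[le_sLu /eqP eq_occ]; apply/andP; split.
  by rewrite (leq_trans _ le_sLu) // leq_add2l.
by rewrite -(take_takel _ le_L) eq_occ take_takel.
Qed.

Lemma is_source_prefix S1 S2 u m L s :
  take (u + m) S1 = take (u + m) S2 -> L <= m ->
  is_source S1 u L s = is_source S2 u L s.
Proof.
move=> eq_m le_Lm.
have eq_L : take (u + L) S1 = take (u + L) S2.
  have le_uL : u + L <= u + m by rewrite leq_add2l.
  by rewrite -(take_takel _ le_uL) eq_m take_takel.
rewrite /is_source /occ; case: leqP => //= lt_sLu.
by rewrite (eq_take_drop _ eq_L) ?(eq_take_drop (s := u) _ eq_L) //; lia.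
Qed.

Lemma phrase_len_prefix_leq S1 S2 u m :
  take (u + m) S1 = take (u + m) S2 -> u + m <= size S2 ->
  phrase_len S1 u < m -> phrase_len S1 u <= phrase_len S2 u.
Proof.
move=> eq_m le_um lt_L1; rewrite leqNgt; apply/negP => lt_L2.
have le_su : phrase_src S1 u <= u by have := phrase_src_len_leq S1 u; lia.
have src2 : is_source S2 u (phrase_len S2 u).+1 (phrase_src S1 u).
  rewrite -(is_source_prefix _ eq_m); last by lia.
  exact: is_source_leq lt_L2 (is_source_phrase S1 u).
have lt_size : (phrase_len S2 u).+1 < size S2 - u by lia.
by have := leq_phrase_len lt_size le_su src2; rewrite ltnn.
Qed.

Lemma eq_phrase_prefix S1 S2 u m :
  take (u + m) S1 = take (u + m) S2 -> u + m <= size S1 -> u + m <= size S2 ->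
  phrase_len S1 u < m -> phrase_len S2 u < m ->
  phrase_len S1 u = phrase_len S2 u /\ phrase_src S1 u = phrase_src S2 u.
Proof.
move=> eq_m le1 le2 lt1 lt2.
have eq_len : phrase_len S1 u = phrase_len S2 u.
  apply/eqP; rewrite eqn_leq (phrase_len_prefix_leq eq_m le2 lt1).
  exact: phrase_len_prefix_leq (esym eq_m) le1 lt2.
split=> //; rewrite /phrase_src -eq_len; apply: eq_find => s.
exact: is_source_prefix eq_m (ltnW lt1).
Qed.
End Phrase.

Section Parse.
Variable T : eqType.
Implicit Types S A B : seq T.

Definition phrase_span (t : nat * nat * T) : nat := t.1.2.+1.

Definition phrase_start S k : nat := sumn (map phrase_span (take k (lz77 S))).

Lemma lz_fromS f u S : lz_from f.+1 u S =
  if drop (u + phrase_len S u) S is a :: _ then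
    (phrase_src S u, phrase_len S u, a) :: lz_from f (u + phrase_len S u).+1 S
  else [::].
Proof. by []. Qed.

Lemma lz_from_oversize f u S : size S <= u -> lz_from f u S = [::].
Proof.
by case: f => //= f le_Su; rewrite drop_oversize // (leq_trans le_Su) ?leq_addr.
Qed.

Lemma drop_lz_from n f u S : drop n (lz_from f u S) =
  lz_from (f - n) (u + sumn (map phrase_span (take n (lz_from f u S)))) S.
Proof.
elim: n f u => [|n IH] [|f] u; rewrite ?drop0 ?take0 ?addn0 //= .
case E: (drop (u + phrase_len S u) S) => [|a r] /=;
  last by rewrite IH subSS addnA addnS.
rewrite addn0 lz_from_oversize // leqNgt; apply/negP => /phrase_len_lt_size.
by rewrite -subn_gt0 -size_drop E.
Qed.

Lemma drop_lz77 S k : drop k (lz77 S) = lz_from (size S - k) (phrase_start S k) S.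
Proof. exact: drop_lz_from. Qed.

Lemma leq_phrase_start S k : k <= size (lz77 S) -> k <= phrase_start S k.
Proof.
move=> le_k; rewrite -[k in k <= _](size_takel le_k) /phrase_start.
by elim: (take k _) => //= t s IH; rewrite -add1n leq_add.
Qed.

Lemma lz_from_common_prefix A B n fA fB u :
  take u A = take u B -> u <= size A ->
  n <= lcp (lz_from fA u A) (lz_from fB u B) ->
  let v := u + sumn (map phrase_span (take n (lz_from fA u A))) in
  take v A = take v B /\ v <= size A.
Proof.
elim: n fA fB u => [|n IH] fA fB u eq_u le_u; first by rewrite take0 addn0.
case: fA fB => [|fA] [|fB] //; first by rewrite lcpC.
rewrite !lz_fromS.
case EA: (drop (u + phrase_len A u) A) => [|a ra] //.
case EB: (drop (u + phrase_len B u) B) => [|b rb] //=.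
case: ifP => // /eqP [eq_src eq_len eq_ab]; rewrite ltnS => le_n.
rewrite -eq_len -eq_ab in EB le_n.
have lt_size : u + phrase_len A u < size A by rewrite -subn_gt0 -size_drop EA.
have eq_next : take (u + phrase_len A u).+1 A = take (u + phrase_len A u).+1 B.
  rewrite !takeDS EA EB eq_u; congr (_ ++ _ ++ _); last by rewrite /= !take0.
  have /andP[le_src /eqP occA] := is_source_phrase A u.
  have /andP[_ /eqP occB] := is_source_phrase B u.
  by rewrite -occA (eq_take_drop le_src eq_u) eq_len eq_src occB.
by rewrite /phrase_span /= addnA addnS; apply: IH le_n.
Qed.
End Parse.

Definition lz_probe (T : eqType) (S : seq T) (k L s : nat) : nat :=
  lcp (drop (phrase_start S k) S) (take L (drop s S)).

Section CommonParse.
Variables (T : eqType) (A B : seq T).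

Let k := lcp (lz77 A) (lz77 B).
Let p := phrase_start A k.

Lemma phrase_start_lcp : phrase_start B k = p.
Proof. by rewrite /p /phrase_start take_lcp. Qed.

Lemma take_phrase_start : take p A = take p B /\ p <= size A.
Proof.
have := @lz_from_common_prefix _ A B k (size A) (size B) 0.
by rewrite !take0 add0n; apply.
Qed.

Lemma lcp_phrase_start : lcp A B = p + lcp (drop p A) (drop p B).
Proof. by case: take_phrase_start => eq_p le_p; apply: lcp_common_prefix. Qed.

Lemma lcp_drop_phrase_start :
  lcp (drop p A) (drop p B) <= maxn (phrase_len A p) (phrase_len B p).
Proof.
have [eq_p le_p] := take_phrase_start.
set m := lcp (drop p A) (drop p B); rewrite leqNgt; apply/negP => lt_max.
have le_mA : p + m <= size A.
  by have := lcp_leq_size (drop p A) (drop p B); rewrite size_drop; lia.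
have le_mB : p + m <= size B.
  by have := lcp_leq_size (drop p B) (drop p A); rewrite size_drop lcpC; lia.
have eq_m : take (p + m) A = take (p + m) B by rewrite !takeD eq_p take_lcp.
have [eq_len eq_src] := eq_phrase_prefix eq_m le_mA le_mB
  (leq_ltn_trans (leq_maxl _ _) lt_max) (leq_ltn_trans (leq_maxr _ _) lt_max).
have le_kp : k <= p by apply/leq_phrase_start/lcp_leq_size.
have no_next := lcp_drop_lcp (lz77 A) (lz77 B).
have lt_kA : k < size A by lia.
have lt_kB : k < size B by lia.
rewrite !drop_lz77 phrase_start_lcp -(subnSK lt_kA) -(subnSK lt_kB) in no_next.
rewrite !lz_fromS -/k -/p -eq_len -eq_src in no_next.
have := @eq_take_drop _ A B (p + m) (p + phrase_len A p) 1 ltac:(lia) eq_m.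
have nonempty (S : seq T) : p + m <= size S -> drop (p + phrase_len A p) S != [::].
  by rewrite -size_eq0 size_drop; lia.
case: (drop _ A) (nonempty A le_mA) no_next => [|a ra] // _.
case: (drop _ B) (nonempty B le_mB) => [|b rb] //= _ no_next.
by rewrite !take0 => -[eq_ab]; move: no_next; rewrite eq_ab eqxx.
Qed.

Lemma lz_probe_phraseB :
  lz_probe A k (phrase_len B p) (phrase_src B p) =
  minn (lcp (drop p A) (drop p B)) (phrase_len B p).
Proof.
have /andP[le_src /eqP occB] := is_source_phrase B p.
by rewrite /lz_probe -/p (eq_take_drop le_src take_phrase_start.1) occB lcp_take.
Qed.

Lemma lz_probe_phraseA :
  lz_probe B k (phrase_len A p) (phrase_src A p) =
  minn (lcp (drop p A) (drop p B)) (phrase_len A p).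
Proof.
have /andP[le_src /eqP occA] := is_source_phrase A p.
rewrite /lz_probe phrase_start_lcp -(eq_take_drop le_src take_phrase_start.1).
by rewrite occA lcp_take lcpC.
Qed.
End CommonParse.

Fixpoint bits_with_fuel (f n : nat) : seq bool :=
  if f is f.+1 then
    if n is 0 then [::] else odd n :: bits_with_fuel f n./2
  else [::].

Definition bits_of_nat (n : nat) : seq bool := bits_with_fuel n n.

Definition nat_of_bits (s : seq bool) : nat :=
  foldr (fun (b : bool) n => b + n.*2) 0 s.

Lemma bits_of_natK : cancel bits_of_nat nat_of_bits.
Proof.
suff fuelK f n : n <= f -> nat_of_bits (bits_with_fuel f n) = n.
  by move=> n; apply: fuelK.
elim: f n => [|f IH] [|n] //= le_nf.
by rewrite IH ?(odd_double_half n.+1) // leq_uphalf_double; lia.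
Qed.

Lemma size_bits_of_nat n : size (bits_of_nat n) <= (trunc_log 2 n).+1.
Proof.
suff size_fuel f m e : m < 2 ^ e -> size (bits_with_fuel f m) <= e.
  exact/size_fuel/trunc_log_ltn.
elim: f m e => [|f IH] [|m] [|e] //=; rewrite expnS ltnS => lt_m.
by apply: IH; rewrite ltn_uphalf_double; lia.
Qed.

Lemma comm_cost_bits (vs : seq nat) b : all (fun v => v <= b) vs ->
  comm_cost (map bits_of_nat vs) <= size vs * (trunc_log 2 b).+1.
Proof.
elim: vs => //= v vs IH /andP[le_vb /IH le_vs]; rewrite mulSn leq_add //.
by apply: leq_trans (size_bits_of_nat v) _; rewrite ltnS leq_trunc_log.
Qed.

Section Protocol.
Variable T : eqType.

Definition nat_heard (tr : seq (seq bool)) (i : nat) : nat :=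
  nat_of_bits (nth [::] tr i).

(* [j] is 0 for Alice and 1 for Bob: the partner spoke in rounds [1 - j], [3 - j]. *)
Definition lcp_msg (j : nat) (x : seq T * nat) (tr : seq (seq bool)) : seq bool :=
  let p := phrase_start x.1 x.2 in
  bits_of_nat (match size tr with
    | 0 | 1 => phrase_len x.1 p
    | 2 | 3 => phrase_src x.1 p
    | _ => lz_probe x.1 x.2 (nat_heard tr (1 - j)) (nat_heard tr (3 - j))
    end).

Definition lcp_out (x : seq T * nat) (tr : seq (seq bool)) : nat :=
  phrase_start x.1 x.2 + maxn (nat_heard tr 4) (nat_heard tr 5).

Definition lcp_protocol : protocol (seq T * nat) (seq T * nat) nat :=
  Protocol 6 (lcp_msg 0) (lcp_msg 1) lcp_out lcp_out.

Section Run.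
Variables (A B : seq T) (k : nat).
Let pA := phrase_start A k.
Let pB := phrase_start B k.

Lemma lcp_protocol_transcript :
  transcript lcp_protocol (A, k) (B, k) =
  map bits_of_nat
    [:: phrase_len A pA; phrase_len B pB; phrase_src A pA; phrase_src B pB;
        lz_probe A k (phrase_len B pB) (phrase_src B pB);
        lz_probe B k (phrase_len A pA) (phrase_src A pA)].
Proof. by rewrite /transcript /step /= /lcp_msg /= /nat_heard /= !bits_of_natK. Qed.
End Run.
End Protocol.

Theorem lemma6 :
  exists R c : nat, forall T : eqType,
    exists P : protocol (seq T * nat) (seq T * nat) nat,
      rounds P <= R /\
      forall A B : seq T,
        let k := lcp (lz77 A) (lz77 B) in
        let tr := transcript P (A, k) (B, k) in
        [/\ out_A P (A, k) tr = lcp A B,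
            out_B P (B, k) tr = lcp A B &
            comm_cost tr <= c * (trunc_log 2 (lcp A B)).+1].
Proof.
exists 6, 6 => T; exists (lcp_protocol T); split => // A B k tr.
have := lcp_protocol_transcript A B k.
rewrite -/tr phrase_start_lcp lz_probe_phraseA lz_probe_phraseB -/k => tr_eq.
set p := phrase_start A k in tr_eq *.
have lcpAB := lcp_phrase_start A B; have le_m := lcp_drop_phrase_start A B.
rewrite -/k -/p in lcpAB le_m.
have heardE : maxn (nat_heard tr 4) (nat_heard tr 5) = lcp (drop p A) (drop p B).
  by rewrite /nat_heard tr_eq /= !bits_of_natK; lia.
split; rewrite /= /lcp_out /= ?phrase_start_lcp -/k -/p ?heardE //.
rewrite tr_eq; apply: comm_cost_bits.
have := phrase_src_len_leq A p; have := phrase_src_len_leq B p.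
rewrite /= lcpAB; lia.
Qed.
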